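(* Consider logistic regression with binary responses $y_i\in\{0,1\}$, $i=1,\dots,n$, design matrix $X\in\mathbb{R}^{n\times(p+1)}$ whose first column is the intercept column, whose next $m$ columns are mandatory predictors and whose remaining columns form $X_u\in\mathbb{R}^{n\times(p-m)}$, and log-likelihood $\ell(\beta_0,\boldsymbol{\beta})=\sum_{i=1}^n\bigl(y_i\eta_i-\log(1+e^{\eta_i})\bigr)$ with $\eta_i=\beta_0+\mathbf{x}_i^\top\boldsymbol{\beta}$. Fix $\lambda\ge0$, let $\nu_{\max}$ be the largest eigenvalue of $X_u^\top X_u$, and let $\delta\ge\nu_{\max}/(8n)$, $\delta>0$. For $\mathbf{t}\in[0,1]^{p-m}$ let $T_{\mathbf{t}}=\mathrm{diag}(1,\dots,1,t_1,\dots,t_{p-m})$ (with $m$ leading ones), $\Gamma_{\mathbf{t}}=\sqrt{I-T_{\mathbf{t}}^2}$, and $$f_{\delta,\lambda}(\mathbf{t})=\inf_{\beta_0,\boldsymbol{\beta}}\Bigl[-\tfrac1n\ell(\beta_0,T_{\mathbf{t}}\boldsymbol{\beta})+\lambda\|\boldsymbol{\beta}\|_2^2+\delta\|\Gamma_{\mathbf{t}}\boldsymbol{\beta}\|_2^2\Bigr].$$ Then $f_{\delta,\lambda}$ is concave on $(0,1)^{p-m}$ (extending concavely to $\mathcal{T}_k=\{\mathbf{t}\in[0,1]^{p-m}:\mathbf{1}^\top\mathbf{t}=k\}$), and a minimizer of $f_{\delta,\lambda}$ over $\mathcal{T}_k$ can be chosen in $\mathcal{S}_k=\{\mathbf{s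}\in\{0,1\}^{p-m}:\mathbf{1}^\top\mathbf{s}=k\}$.
   Context: Here $\mathbf{x}_i^\top$ is the $i$th row of $X$ without the intercept entry. The quantity $\nu_{\max}/(8n)$ is the paper's explicit concavity threshold for logistic regression. *)

From HB Require Import structures.
From mathcomp Require Import all_boot all_order all_algebra.
From mathcomp Require Import all_classical all_reals all_analysis.
Set Implicit Arguments. Unset Strict Implicit. Unset Printing Implicit Defensive.
Import Order.TTheory GRing.Theory Num.Theory.
Local Open Scope classical_set_scope.
Local Open Scope ring_scope.

Section LogReg.
Variable R : realType.

Definition Tmx (m q : nat) (t : 'rV[R]_q) : 'M[R]_(m + q) :=
  diag_mx (row_mx (const_mx 1) t).

Definition Gmx (m q : nat) (t : 'rV[R]_q) : 'M[R]_(m + q) :=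
  diag_mx (\row_j Num.sqrt (1 - (row_mx (const_mx 1) t : 'rV[R]_(m + q)) 0 j ^+ 2)).

Definition sqnorm (d : nat) (v : 'cV[R]_d) : R := \sum_i (v i 0) ^+ 2.

(* logistic log-likelihood; X holds the rows x_i^T (without intercept) *)
Definition loglik (n d : nat) (X : 'M[R]_(n, d)) (y : 'I_n -> R)
  (b0 : R) (b : 'cV[R]_d) : R :=
  \sum_i (y i * (b0 + (X *m b) i 0) - ln (1 + expR (b0 + (X *m b) i 0))).

Definition f_obj (n m q : nat) (X : 'M[R]_(n, m + q)) (y : 'I_n -> R)
  (del lam : R) (t : 'rV[R]_q) : R :=
  inf (range (fun bb : R * 'cV[R]_(m + q) =>
     - (n%:R)^-1 * loglik X y bb.1 (Tmx m t *m bb.2)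
     + lam * sqnorm bb.2 + del * sqnorm (Gmx m t *m bb.2))).

Definition concave_on (q : nat) (A : set 'rV[R]_q) (f : 'rV[R]_q -> R) : Prop :=
  forall x y, A x -> A y -> forall th : R, 0 <= th <= 1 ->
    th * f x + (1 - th) * f y <= f (th *: x + (1 - th) *: y).

Definition open_cube (q : nat) : set 'rV[R]_q :=
  [set t | forall j, 0 < t 0 j < 1].

Definition Tk (q k : nat) : set 'rV[R]_q :=
  [set t | (forall j, 0 <= t 0 j <= 1) /\ \sum_j t 0 j = k%:R].

Definition Sk (q k : nat) : set 'rV[R]_q :=
  [set s | (forall j, s 0 j = 0 \/ s 0 j = 1) /\ \sum_j s 0 j = k%:R].

End LogReg.

(* For fixed coefficients (b0, b) the penalised objective is concave in t on
   [0,1]^q, so f, an infimum of such functions, is concave.  Indeed T_t b is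
   affine in t, and the log-likelihood fails to be concave only through the
   softplus x |-> ln (1 + e^x), whose second derivative is at most 1/4: along
   the segment [t1, t2] it loses at most th (1 - th) |X w|^2 / (8 n) with
   w = T_t1 b - T_t2 b.  As w vanishes on the mandatory coordinates,
   |X w|^2 <= nu_max |w|^2, while del |Gamma_t b|^2 = del sum_j (1 - t_j^2) b_j^2
   gains exactly del th (1 - th) |w|^2 >= th (1 - th) nu_max |w|^2 / (8 n).
   A concave function on T_k is minimised on S_k: a point of T_k with a
   fractional coordinate has a second one, and moving mass between the two, in
   either direction until one of them reaches 0 or 1, writes the point as a
   convex combination of two points of T_k with fewer fractional coordinates. *)

From HB Require Import structures.
From mathcomp Require Import all_boot all_order all_algebra.
From mathcomp Require Import all_classical all_reals all_analysis.
From mathcomp Require Import ring lra zify.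
Import Order.TTheory GRing.Theory Num.Theory.
Import numFieldNormedType.Exports.
Local Open Scope classical_set_scope.
Local Open Scope ring_scope.

Set Implicit Arguments. Unset Strict Implicit. Unset Printing Implicit Defensive.

Section convexity.
Variable R : realType.

Lemma derive2_ge0_convex (f df ddf : R -> R) :
  (forall x : R, is_derive x 1 f (df x)) -> (forall x : R, is_derive x 1 df (ddf x)) ->
  (forall x, 0 <= ddf x) ->
  forall th a b, 0 <= th <= 1 ->
  f (th * a + (1 - th) * b) <= th * f a + (1 - th) * f b.
Proof.
move=> f' f'' f''_ge0.
have Df : 'D_1 f = df by apply/funext => x; exact: derive_val.
have convex_le th a b : 0 <= th <= 1 -> a <= b ->
    f (th * a + (1 - th) * b) <= th * f a + (1 - th) * f b.
  move=> /andP[th0 th1] ab.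
  have fC x : {for x, continuous f}.
    by apply: differentiable_continuous; apply/derivable1_diffP; exact: ex_derive.
  have := @second_derivative_convex R f a b _ _ _ _ _ (Itv01 th0 th1) ab.
  rewrite !convRE /unstable.onem; apply.
  - by move=> x _; rewrite Df derive_val.
  - exact/cvg_at_left_filter/fC.
  - exact/cvg_at_right_filter/fC.
  - by move=> x _; exact: ex_derive.
  - by move=> x _; rewrite Df; exact: ex_derive.
move=> th a b th01; have [ab|/ltW ba] := leP a b; first exact: convex_le.
have th01' : 0 <= 1 - th <= 1 by move: th01 => /andP[? ?]; apply/andP; split; lra.
have := convex_le _ _ _ th01' ba; have -> : 1 - (1 - th) = th by ring.
by rewrite addrC [X in _ <= X]addrC.
Qed.

End convexity.

Section softplus.
Variable R : realType.
Implicit Types x a b th : R.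

Definition softplus x := ln (1 + expR x).
Definition sigmoid x := expR x / (1 + expR x).

Lemma oneDexpR_gt0 x : 0 < 1 + expR x.
Proof. by rewrite addr_gt0 ?expR_gt0. Qed.

Lemma is_derive_oneDexpR x : is_derive x 1 (fun z => 1 + expR z) (expR x).
Proof.
by have := is_deriveD (is_derive_cst (1 : R) x 1) (is_derive_expR x); rewrite add0r.
Qed.

Lemma is_derive_softplus x : is_derive x 1 softplus (sigmoid x).
Proof.
have := is_derive1_comp (g := fun z => 1 + expR z)
  (is_derive1_ln (oneDexpR_gt0 x)) (is_derive_oneDexpR x).
by rewrite /sigmoid mulrC.
Qed.

Lemma is_derive_sigmoid x : is_derive x 1 sigmoid (expR x / (1 + expR x) ^+ 2).
Proof.
have -> : sigmoid = fun z => 1 - (1 + expR z)^-1.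
  by apply/funext => z; rewrite /sigmoid; field; rewrite gt_eqF ?oneDexpR_gt0.
have := is_deriveB (is_derive_cst (1 : R) x 1)
  (is_deriveV (f := fun z => 1 + expR z) (lt0r_neq0 (oneDexpR_gt0 x)) (is_derive_oneDexpR x)).
by congr is_derive; rewrite /GRing.scale /=; field; rewrite gt_eqF ?oneDexpR_gt0.
Qed.

Lemma softplus_convex_defect th a b : 0 <= th <= 1 ->
  th * softplus a + (1 - th) * softplus b - softplus (th * a + (1 - th) * b)
  <= th * (1 - th) / 8 * (a - b) ^+ 2.
Proof.
move=> th01; rewrite -subr_ge0.
pose g x := x ^+ 2 / 8 - softplus x.
have g' x : is_derive x 1 g (x / 4 - sigmoid x).
  have := is_deriveB (is_deriveM (is_deriveX 2 (is_derive_id x 1))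
    (is_derive_cst (8^-1 : R) x 1)) (is_derive_softplus x).
  by congr is_derive; rewrite /GRing.scale /=; field.
have g'' x : is_derive x 1 (fun z => z / 4 - sigmoid z)
    (4^-1 - expR x / (1 + expR x) ^+ 2).
  have := is_deriveB (is_deriveM (is_derive_id x 1) (is_derive_cst (4^-1 : R) x 1))
    (is_derive_sigmoid x).
  by congr is_derive; rewrite /GRing.scale /=; field.
have g''_ge0 x : 0 <= 4^-1 - expR x / (1 + expR x) ^+ 2.
  rewrite subr_ge0 ler_pdivrMr ?exprn_gt0 ?oneDexpR_gt0 //.
  by have := sqr_ge0 (1 - expR x); lra.
have := derive2_ge0_convex g' g'' g''_ge0 a b th01.
by rewrite /g; lra.
Qed.

End softplus.

Lemma quadratic_ge0_linear_coef0 (R : realFieldType) (a c : R) :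
  (forall e, 0 <= 2 * e * a + e ^+ 2 * c) -> a = 0.
Proof.
move=> ge0; have c_ge0 : 0 <= c by have := ge0 1; have := ge0 (-1); lra.
have := ge0 (- (a / (c + 1))).
have -> : 2 * - (a / (c + 1)) * a + (- (a / (c + 1))) ^+ 2 * c
          = - (a ^+ 2 * (c + 2)) / (c + 1) ^+ 2 by field; lra.
have c1_gt0 : 0 < (c + 1) ^+ 2 by rewrite exprn_gt0 //; lra.
rewrite pmulr_lge0 ?invr_gt0 // oppr_ge0 => a2c_le0.
have a2_le0 : a ^+ 2 <= 0 by nra.
by apply/eqP; rewrite -sqrf_eq0 eq_le a2_le0 sqr_ge0.
Qed.

Section quadratic_form.
Variables (R : realType) (d : nat).
Implicit Types (M B : 'M[R]_d) (u v w : 'rV[R]_d).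

Definition qform M u : R := (u *m M *m u^T) 0 0.

Lemma qform1 u : qform 1%:M u = \sum_j u 0 j ^+ 2.
Proof. by rewrite /qform mulmx1 mxE; apply: eq_bigr => j _; rewrite mxE expr2. Qed.

Lemma qform1_ge0 u : 0 <= qform 1%:M u.
Proof. by rewrite qform1 sumr_ge0 // => j _; rewrite sqr_ge0. Qed.

Lemma qform1_eq0 u : qform 1%:M u = 0 -> u = 0.
Proof.
rewrite qform1 => /psumr_eq0P u0; apply/rowP => j; rewrite mxE.
by apply/eqP; rewrite -sqrf_eq0; apply/eqP/u0 => // k _; rewrite sqr_ge0.
Qed.

Lemma qformB M B u : qform (M - B) u = qform M u - qform B u.
Proof. by rewrite /qform mulmxBr mulmxBl !mxE. Qed.

Lemma qform_scalar (c : R) u : qform c%:M u = c * qform 1%:M u.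
Proof. by rewrite /qform mul_mx_scalar mulmx1 -scalemxAl mxE. Qed.

Lemma qformZ M (c : R) u : qform M (c *: u) = c ^+ 2 * qform M u.
Proof.
by rewrite /qform [(c *: u)^T]linearZ -!scalemxAl -scalemxAr !mxE mulrA expr2.
Qed.

Lemma qformDZ M u w (e : R) : M^T = M ->
  qform M (u + e *: w) = qform M u + 2 * e * (u *m M *m w^T) 0 0 + e ^+ 2 * qform M w.
Proof.
move=> Msym.
have sym : (w *m M *m u^T) 0 0 = (u *m M *m w^T) 0 0.
  rewrite [LHS](_ : _ = (w *m M *m u^T)^T 0 0); last by rewrite [RHS]mxE.
  by rewrite !trmx_mul trmxK Msym mulmxA.
rewrite /qform linearD linearZ /= !mulmxDl !mulmxDr -!scalemxAl -!scalemxAr.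
move: sym; set a := u *m M *m u^T; set b := u *m M *m w^T.
set c := w *m M *m u^T; set f := w *m M *m w^T.
by rewrite !mxE => ->; ring.
Qed.

Lemma psd_qform_eq0 B u : B^T = B -> (forall v, 0 <= qform B v) ->
  qform B u = 0 -> u *m B = 0.
Proof.
move=> Bsym B_psd Bu0; set z := u *m B.
have z2 : qform 1%:M z = (u *m B *m z^T) 0 0 by rewrite /qform mulmx1.
apply: qform1_eq0; apply: (@quadratic_ge0_linear_coef0 _ _ (qform B z)) => e.
by have := B_psd (u + e *: z); rewrite qformDZ // Bu0 add0r z2.
Qed.

Lemma continuous_qform M : continuous (qform M).
Proof.
have -> : qform M = fun u => \sum_j \sum_i u 0 i * M i j * u 0 j.
  apply/funext => u; rewrite /qform mxE; apply: eq_bigr => j _.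
  by rewrite !mxE mulr_suml.
apply: continuous_big => [|j _]; first exact: add_continuous.
apply: continuous_big => [|i _ u]; first exact: add_continuous.
apply: (continuousM (s := fun v : 'rV[R]_d => v 0 i * M i j)); last exact: coord_continuous.
apply: (continuousM (s := fun v : 'rV[R]_d => v 0 i)); first exact: coord_continuous.
exact: cst_continuous.
Qed.

Lemma compact_unit_sphere : compact [set u | qform 1%:M u = 1].
Proof.
apply: bounded_closed_compact.
  exists 1; split; first by rewrite num_real.
  move=> r r1 u /= u1; rewrite [leLHS]/Num.norm /= mx_normrE.
  apply: bigmax_le => [|[i j] _ /=]; first lra.
  have : u i j ^+ 2 <= 1.
    by rewrite (ord1 i) -u1 qform1 (bigD1 j) //= lerDl sumr_ge0 // => k _; rewrite sqr_ge0.
  rewrite -real_normK ?num_real //; have := normr_ge0 (u i j); nra.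
apply: (@preimage_closed _ _ (qform 1%:M) [set x | x = 1]); last exact: closed_eq.
by move=> u _; exact: continuous_qform.
Qed.

Lemma qform_le_eigenvalue_bound M (mu : R) : M^T = M ->
  (forall nu, eigenvalue M nu -> nu <= mu) ->
  forall u, qform M u <= mu * qform 1%:M u.
Proof.
move=> Msym le_mu u; have [->|u0] := eqVneq u 0.
  by rewrite /qform !mul0mx mxE mulr0.
set S := [set v | qform 1%:M v = 1].
have normalize v : v != 0 -> exists2 c : R, 0 < c & S (c *: v).
  move=> v0; have v_gt0 : 0 < qform 1%:M v.
    by rewrite lt_neqAle qform1_ge0 andbT eq_sym; apply: contra v0 => /eqP/qform1_eq0->.
  exists (Num.sqrt (qform 1%:M v))^-1; first by rewrite invr_gt0 sqrtr_gt0.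
  by rewrite /S /= qformZ exprVn sqr_sqrtr ?qform1_ge0 // mulVf ?gt_eqF.
have S0 : S !=set0 by have [c _ Scu] := normalize u u0; exists (c *: u).
(* A maximiser w of [qform M] on the unit sphere is an eigenvector: the form of
   C%:M - M, with C := qform M w, is nonnegative and vanishes at w. *)
have [w /[!inE] Sw w_max] := EVT_max_rV S0 compact_unit_sphere
  (continuous_subspaceT (@continuous_qform M)).
set C := qform M w.
have le_C v : qform M v <= C * qform 1%:M v.
  have [->|v0] := eqVneq v 0; first by rewrite /qform !mul0mx mxE mulr0.
  have [c c_gt0 Scv] := normalize v v0.
  have := w_max _ (mem_set Scv); rewrite /S /= qformZ in Scv *; rewrite qformZ.
  move=> le_c2C.
  have -> : qform M v = c ^+ 2 * qform M v * qform 1%:M v by rewrite mulrAC Scv mul1r.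
  by rewrite ler_wpM2r ?qform1_ge0.
have wMC : w *m M = C *: w.
  apply/eqP; rewrite eq_sym -subr_eq0 -mul_mx_scalar -mulmxBr; apply/eqP.
  apply: psd_qform_eq0 => [|v|].
  - by rewrite linearB /= Msym tr_scalar_mx.
  - by rewrite qformB qform_scalar subr_ge0.
  - by rewrite qformB qform_scalar Sw mulr1 subrr.
have w0 : w != 0.
  apply/eqP => w0; move: Sw; rewrite /S /= w0 /qform !mul0mx mxE.
  by move=> /esym/eqP; rewrite oner_eq0.
have /le_mu C_le_mu : eigenvalue M C by apply/eigenvalueP; exists w.
by apply: le_trans (le_C u) _; rewrite ler_wpM2r ?qform1_ge0.
Qed.

End quadratic_form.

Section sqnorm.
Variable R : realType.

Lemma sqnorm_qform d (v : 'cV[R]_d) : sqnorm v = qform 1%:M v^T.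
Proof. by rewrite qform1; apply: eq_bigr => j _; rewrite mxE. Qed.

Lemma sqnorm_ge0 d (v : 'cV[R]_d) : 0 <= sqnorm v.
Proof. by rewrite sqnorm_qform qform1_ge0. Qed.

Lemma sqnorm_mulmx_le n d (A : 'M[R]_(n, d)) (mu : R) :
  (forall nu, eigenvalue (A^T *m A) nu -> nu <= mu) ->
  forall v, sqnorm (A *m v) <= mu * sqnorm v.
Proof.
move=> le_mu v; rewrite !sqnorm_qform.
have -> : qform 1%:M (A *m v)^T = qform (A^T *m A) v^T.
  by rewrite /qform mulmx1 !trmx_mul !trmxK !mulmxA.
by apply: qform_le_eigenvalue_bound le_mu _; rewrite trmx_mul trmxK.
Qed.

Lemma sqnorm_mulmx_rsub_le n m q (X : 'M[R]_(n, m + q)) (mu : R) :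
  (forall nu, eigenvalue ((rsubmx X)^T *m rsubmx X) nu -> nu <= mu) ->
  forall w, usubmx w = 0 -> sqnorm (X *m w) <= mu * sqnorm w.
Proof.
move=> le_mu w w_u0.
have -> : X *m w = rsubmx X *m dsubmx w.
  by rewrite -{1}[X]hsubmxK -{1}[w]vsubmxK mul_row_col w_u0 mulmx0 add0r.
have -> : sqnorm w = sqnorm (dsubmx w).
  rewrite /sqnorm big_split_ord /= big1 ?add0r => [|i _].
    by apply: eq_bigr => k _; rewrite mxE.
  by have /matrixP/(_ i 0) := w_u0; rewrite !mxE => ->; rewrite expr0n.
exact: sqnorm_mulmx_le.
Qed.

End sqnorm.

Section concave_on.
Variables (R : realType) (q : nat).
Implicit Types (A B : set 'rV[R]_q).

Lemma concave_onS A B (f : 'rV[R]_q -> R) : A `<=` B -> concave_on B f -> concave_on A f.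
Proof. by move=> AB fB x y Ax Ay; apply: fB; apply: AB. Qed.

Lemma concave_on_inf (T : Type) (b0 : T) A (g : 'rV[R]_q -> T -> R) :
  (forall t, has_lbound (range (g t))) -> (forall b, concave_on A (g ^~ b)) ->
  concave_on A (fun t => inf (range (g t))).
Proof.
move=> g_lb g_concave x y Ax Ay th th01; apply: lb_le_inf => [|_ [b _ <-]].
  by exists (g (th *: x + (1 - th) *: y) b0), b0.
apply: le_trans (g_concave b x y Ax Ay th th01); case/andP: th01 => th0 th1.
by apply: lerD; apply: ler_wpM2l; rewrite ?subr_ge0 //; apply: ge_inf => //; exists b.
Qed.

End concave_on.

Section logistic_loss.
Variable R : realType.
Implicit Types th : R.

Lemma loglik_le0 n d (X : 'M[R]_(n, d)) y b0 b :
  (forall i, 0 <= y i <= 1) -> loglik X y b0 b <= 0.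
Proof.
move=> y01; rewrite /loglik sumr_le0 // => i _; set e := b0 + _.
have sp_ge0 : 0 <= ln (1 + expR e) by rewrite ln_ge0 // lerDl expR_ge0.
have sp_ge : e <= ln (1 + expR e).
  by rewrite -ler_expR lnK ?posrE ?oneDexpR_gt0 // lerDr.
have /andP[y0 y1] := y01 i; rewrite subr_le0.
have : y i * e <= y i * ln (1 + expR e) by rewrite ler_wpM2l.
have : y i * ln (1 + expR e) <= ln (1 + expR e) by rewrite ler_piMl.
lra.
Qed.

Lemma loglik_concavity_defect n d (X : 'M[R]_(n, d)) y b0 (u1 u2 : 'cV[R]_d) th :
  0 <= th <= 1 ->
  loglik X y b0 (th *: u1 + (1 - th) *: u2)
    - (th * loglik X y b0 u1 + (1 - th) * loglik X y b0 u2)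
  <= th * (1 - th) / 8 * sqnorm (X *m (u1 - u2)).
Proof.
move=> th01; rewrite /loglik /sqnorm !mulr_sumr -big_split -sumrB /=.
apply: ler_sum => i _.
rewrite mulmxDr -!scalemxAr mulmxBr.
move: (X *m u1) (X *m u2) => U1 U2; rewrite !mxE.
set a1 := U1 i 0; set a2 := U2 i 0.
have := softplus_convex_defect (b0 + a1) (b0 + a2) th01.
rewrite /softplus (_ : th * (b0 + a1) + (1 - th) * (b0 + a2)
                   = b0 + (th * a1 + (1 - th) * a2)); last by ring.
set s1 := ln (1 + expR (b0 + a1)); set s2 := ln (1 + expR (b0 + a2)).
set sz := ln (1 + expR _).
rewrite (_ : y i * (b0 + (th * a1 + (1 - th) * a2)) - sz
   - (th * (y i * (b0 + a1) - s1) + (1 - th) * (y i * (b0 + a2) - s2))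
   = th * s1 + (1 - th) * s2 - sz); last by ring.
by rewrite (_ : b0 + a1 - (b0 + a2) = a1 - a2) //; ring.
Qed.

End logistic_loss.

Section penalized_loss.
Variables (R : realType) (m q : nat).
Implicit Types (t : 'rV[R]_q) (b : 'cV[R]_(m + q)) (th : R).

Definition tdiag t : 'rV[R]_(m + q) := row_mx (const_mx 1) t.

Definition closed_cube : set 'rV[R]_q := [set t | forall j, 0 <= t 0 j <= 1].

Lemma closed_cube_conv t1 t2 th : closed_cube t1 -> closed_cube t2 -> 0 <= th <= 1 ->
  closed_cube (th *: t1 + (1 - th) *: t2).
Proof.
move=> t1_01 t2_01 /andP[th0 th1] j; rewrite !mxE.
have /andP[? ?] := t1_01 j; have /andP[? ?] := t2_01 j.
by apply/andP; split; nra.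
Qed.

Lemma tdiag_conv t1 t2 th :
  tdiag (th *: t1 + (1 - th) *: t2) = th *: tdiag t1 + (1 - th) *: tdiag t2.
Proof. by apply/rowP => j; rewrite !mxE; case: splitP => k _; rewrite !mxE //; ring. Qed.

Lemma tdiag_cube t j : closed_cube t -> 0 <= tdiag t 0 j <= 1.
Proof. by move=> t01; rewrite mxE; case: splitP => k _; rewrite ?mxE ?ler01 ?lexx. Qed.

Lemma Tmx_mul t b : Tmx m t *m b = \col_j (tdiag t 0 j * b j 0).
Proof. by apply/colP => j; rewrite mul_diag_mx !mxE. Qed.

Lemma Tmx_mul_conv t1 t2 th b : Tmx m (th *: t1 + (1 - th) *: t2) *m b
  = th *: (Tmx m t1 *m b) + (1 - th) *: (Tmx m t2 *m b).
Proof. by rewrite /Tmx -/(tdiag _) tdiag_conv linearD !linearZ /= mulmxDl -!scalemxAl. Qed.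

Lemma usubmx_Tmx_mulB t1 t2 b : usubmx (Tmx m t1 *m b - Tmx m t2 *m b) = 0.
Proof.
by apply/matrixP => i j; rewrite !Tmx_mul !mxE (unsplitK (inl i : 'I_m + 'I_q)) mxE subrr.
Qed.

Lemma sqnorm_Gmx_mul t b : closed_cube t ->
  sqnorm (Gmx m t *m b) = \sum_j (1 - tdiag t 0 j ^+ 2) * b j 0 ^+ 2.
Proof.
move=> t01; apply: eq_bigr => j _; rewrite mul_diag_mx 2!mxE -/(tdiag t).
have /andP[? ?] := tdiag_cube j t01.
by rewrite exprMn sqr_sqrtr // subr_ge0 expr_le1.
Qed.

Lemma sqnorm_Gmx_mul_conv t1 t2 th b :
  closed_cube t1 -> closed_cube t2 -> 0 <= th <= 1 ->
  sqnorm (Gmx m (th *: t1 + (1 - th) *: t2) *m b)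
  = th * sqnorm (Gmx m t1 *m b) + (1 - th) * sqnorm (Gmx m t2 *m b)
    + th * (1 - th) * sqnorm (Tmx m t1 *m b - Tmx m t2 *m b).
Proof.
move=> t1_01 t2_01 th01; have tz01 := closed_cube_conv t1_01 t2_01 th01.
rewrite !sqnorm_Gmx_mul // /sqnorm !mulr_sumr -!big_split /=.
by apply: eq_bigr => j _; rewrite !Tmx_mul tdiag_conv !mxE; ring.
Qed.

Definition pen_nll n (X : 'M[R]_(n, m + q)) (y : 'I_n -> R) (del lam : R) t
    (bb : R * 'cV[R]_(m + q)) : R :=
  - (n%:R)^-1 * loglik X y bb.1 (Tmx m t *m bb.2)
  + lam * sqnorm bb.2 + del * sqnorm (Gmx m t *m bb.2).

Lemma pen_nll_concave n (X : 'M[R]_(n, m + q)) y del lam bb : (0 < n)%N ->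
  (forall w, usubmx w = 0 -> sqnorm (X *m w) <= 8 * n%:R * del * sqnorm w) ->
  concave_on closed_cube (pen_nll X y del lam ^~ bb).
Proof.
move=> n_gt0 X_le t1 t2 t1_01 t2_01 th th01; case: bb => b0 b.
rewrite /pen_nll /= Tmx_mul_conv sqnorm_Gmx_mul_conv //.
have := loglik_concavity_defect X y b0 (Tmx m t1 *m b) (Tmx m t2 *m b) th01.
have := X_le _ (usubmx_Tmx_mulB t1 t2 b).
set w := _ - _; set Lz := loglik _ _ _ (_ + _).
set L1 := loglik _ _ _ (Tmx m t1 *m b); set L2 := loglik _ _ _ (Tmx m t2 *m b).
move=> Xw_le ll_defect; set c := th * (1 - th).
have c_ge0 : 0 <= c by case/andP: th01 => ? ?; rewrite mulr_ge0 // subr_ge0.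
have ni_gt0 : 0 < (n%:R : R)^-1 by rewrite invr_gt0 ltr0n.
have ll_le : - ((n%:R)^-1 * (c / 8 * sqnorm (X *m w)))
             <= (n%:R)^-1 * (th * L1 + (1 - th) * L2 - Lz).
  by rewrite -mulrN ler_pM2l // lerNl opprB.
have Xw_le' : (n%:R)^-1 * (c / 8 * sqnorm (X *m w)) <= del * (c * sqnorm w).
  have -> : del * (c * sqnorm w) = c / 8 * (8 * del * sqnorm w) by field.
  rewrite mulrCA ler_wpM2l ?divr_ge0 // mulrC ler_pdivrMr ?ltr0n //.
  by rewrite (_ : 8 * del * sqnorm w * n%:R = 8 * n%:R * del * sqnorm w) //; ring.
rewrite -subr_ge0; set D := (X in 0 <= X).
have -> : D = (n%:R)^-1 * (th * L1 + (1 - th) * L2 - Lz) + del * (c * sqnorm w).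
  by rewrite /D /c; ring.
lra.
Qed.

Lemma pen_nll_ge0 n (X : 'M[R]_(n, m + q)) y del lam t bb :
  (forall i, 0 <= y i <= 1) -> 0 <= lam -> 0 <= del -> 0 <= pen_nll X y del lam t bb.
Proof.
move=> y01 lam_ge0 del_ge0; rewrite /pen_nll mulNr -mulrN.
by rewrite !addr_ge0 ?mulr_ge0 ?invr_ge0 ?sqnorm_ge0 // oppr_ge0 loglik_le0.
Qed.

End penalized_loss.

Section vertex_minimum.
Variables (R : realType) (q k : nat).
Implicit Types (t s : 'rV[R]_q) (i j l : 'I_q) (A : {set 'I_q}).

Definition frac_coords t : {set 'I_q} := [set j | 0 < t 0 j < 1].

Definition indicator_row A : 'rV[R]_q := \row_j (j \in A)%:R.

Definition move_mass t i j (a : R) : 'rV[R]_q := t + a *: (delta_mx 0 i - delta_mx 0 j).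

Definition push_mass t i j := move_mass t i j (Num.min (1 - t 0 i) (t 0 j)).

Lemma notin_frac_coords t j : 0 <= t 0 j <= 1 -> j \notin frac_coords t ->
  t 0 j = 0 \/ t 0 j = 1.
Proof.
rewrite inE negb_and -!leNgt => /andP[t0 t1] /orP[? | ?]; [left | right]; lra.
Qed.

Lemma Tk_frac_coords0 t : Tk k t -> (forall j, j \notin frac_coords t) -> Sk k t.
Proof. by move=> [t01 tk] t0; split=> // j; apply: notin_frac_coords. Qed.

Lemma Tk_frac_coords_pair t i : Tk k t -> i \in frac_coords t ->
  exists2 j, j != i & j \in frac_coords t.
Proof.
move=> [t01 tk] ifrac; apply/exists_inP; apply: contraLR isT => /exists_inPn others.
have [c sum_others] : exists c : nat, \sum_(j | j != i) t 0 j = c%:R.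
  apply: (big_ind (fun x : R => exists c : nat, x = c%:R)) => [|_ _ [a ->] [b ->]|j ji].
  - by exists 0%N.
  - by exists (a + b)%N; rewrite natrD.
  - have [->|->] := notin_frac_coords (t01 j) (others j ji); first by exists 0%N.
    by exists 1%N.
move: tk ifrac; rewrite (bigD1 i) //= sum_others inE => /(canRL (addrK _)).
rewrite -[k%:R]/((k : int)%:~R) -[c%:R]/((c : int)%:~R) -intrB => ->.
by rewrite ltr0z ltrz1; lia.
Qed.

Lemma move_massE t i j a l : i != j ->
  move_mass t i j a 0 l = t 0 l + (if l == i then a else if l == j then - a else 0).
Proof.
move=> ij; have ji : (j == i) = false by rewrite eq_sym (negPf ij).
rewrite !mxE !eqxx /=; have [->|li] := eqVneq l i.
  by rewrite (negPf ij) /= mulr1n mulr0n; ring.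
by have [->|lj] := eqVneq l j; rewrite /= ?mulr1n mulr0n; ring.
Qed.

Lemma sum_move_mass t i j a : \sum_l move_mass t i j a 0 l = \sum_l t 0 l.
Proof.
rewrite (eq_bigr (fun l => t 0 l + a * ((l == i)%:R - (l == j)%:R))) => [|l _]; last first.
  by rewrite !mxE !eqxx.
have sum_eq1 i0 : \sum_l ((l == i0)%:R : R) = 1.
  by rewrite (bigD1 i0) //= eqxx big1 ?addr0 // => l /negPf ->.
by rewrite big_split /= -mulr_sumr sumrB !sum_eq1 subrr mulr0 addr0.
Qed.

Lemma push_mass_Tk t i j : Tk k t -> i != j -> i \in frac_coords t -> j \in frac_coords t ->
  Tk k (push_mass t i j) /\ (#|frac_coords (push_mass t i j)| < #|frac_coords t|)%N.
Proof.
move=> [t01 tk] ij ifrac jfrac; have := ifrac; have := jfrac.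
rewrite !inE => /andP[j0 j1] /andP[i0 i1].
have pE := move_massE t _ _ ij; rewrite /push_mass; set a := Num.min _ _.
have [ai aj] : a <= 1 - t 0 i /\ a <= t 0 j by split; rewrite ge_min lexx ?orbT.
have a_hits : a = 1 - t 0 i \/ a = t 0 j.
  by rewrite /a; case: leP; [left|right].
have a_gt0 : 0 < a by case: a_hits => ->; lra.
split.
  split=> [l|]; last by rewrite sum_move_mass.
  by rewrite pE; case: eqP => [->|_]; [|case: eqP => [->|_]]; have := t01 l; lra.
apply: proper_card; apply/properP; split.
  apply/fintype.subsetP => l; rewrite [in X in X -> _]inE pE.
  by case: eqP => [->|_] //; case: eqP => [->|_] //; rewrite addr0 inE.
case: a_hits => a_eq; [exists i | exists j] => //; rewrite inE pE eqxx.
  by rewrite a_eq; lra.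
by rewrite eq_sym (negPf ij) a_eq; lra.
Qed.

Lemma push_mass_conv t i j : i != j -> i \in frac_coords t -> j \in frac_coords t ->
  exists2 th : R, 0 <= th <= 1 & t = th *: push_mass t i j + (1 - th) *: push_mass t j i.
Proof.
move=> ij; rewrite !inE => /andP[i0 i1] /andP[j0 j1].
rewrite /push_mass; set a := Num.min _ _; set b := Num.min _ _.
have a_gt0 : 0 < a by rewrite lt_min; apply/andP; split; lra.
have b_gt0 : 0 < b by rewrite lt_min; apply/andP; split; lra.
exists (b / (a + b)).
  by rewrite divr_ge0 ?ler_pdivrMr ?mul1r; lra.
have ji : j != i by rewrite eq_sym.
apply/rowP => l; have := move_massE t a l ij; have := move_massE t b l ji.
move: (move_mass t i j a) (move_mass t j i b) => P1 P2 P2E P1E; rewrite !mxE P1E P2E.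
case: eqP => [->|li]; first by rewrite (negPf ij); field; lra.
by case: eqP => _; field; lra.
Qed.

Lemma sum_indicator_row A : \sum_j indicator_row A 0 j = #|A|%:R.
Proof.
under eq_bigr do rewrite mxE.
by rewrite -sumr_const [RHS]big_mkcond; apply: eq_bigr => j _; case: (j \in A).
Qed.

Lemma indicator_row_Sk A : #|A| = k -> Sk k (indicator_row A).
Proof.
move=> Ak; split; last by rewrite sum_indicator_row Ak.
by move=> j; rewrite mxE; case: (j \in A); [right | left].
Qed.

Lemma Sk_indicator_row s : Sk k s -> exists2 A : {set 'I_q}, #|A| = k & s = indicator_row A.
Proof.
move=> [s01 sk]; set A := [set j | s 0 j == 1]%SET.
have sA : s = indicator_row A.
  by apply/rowP => j; rewrite !mxE inE; case: (s01 j) => ->; rewrite ?eqxx // eq_sym oner_eq0.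
by exists A => //; apply/eqP; rewrite -(eqr_nat R) -sum_indicator_row -sA sk.
Qed.

Variable F : 'rV[R]_q -> R.
Hypothesis F_concave : concave_on (Tk k) F.

Lemma Tk_vertex_below t : Tk k t -> exists2 s, Sk k s & F s <= F t.
Proof.
have [N] := ubnP #|frac_coords t|; elim: N t => // N IH t frac_lt tTk.
have [/existsP[i ifrac]|/existsPn no_frac] := boolP [exists i, i \in frac_coords t].
  2: by exists t => //; exact: Tk_frac_coords0.
have [j ji jfrac] := Tk_frac_coords_pair tTk ifrac; have ij : i != j by rewrite eq_sym.
have [T1 lt1] := push_mass_Tk tTk ij ifrac jfrac.
have [T2 lt2] := push_mass_Tk tTk ji jfrac ifrac.
have [s1 S1 le1] := IH _ (leq_trans lt1 frac_lt) T1.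
have [s2 S2 le2] := IH _ (leq_trans lt2 frac_lt) T2.
have [th th01 tE] := push_mass_conv ij ifrac jfrac.
have := F_concave T1 T2 th01; rewrite -tE.
case: (leP (F (push_mass t i j)) (F (push_mass t j i))) => [le12|/ltW le21] Fc.
  by exists s1 => //; apply: le_trans le1 _; apply: le_trans Fc; nra.
by exists s2 => //; apply: le_trans le2 _; apply: le_trans Fc; nra.
Qed.

Lemma Tk_vertex_min : (k <= q)%N ->
  exists2 s, Sk k s & forall t, Tk k t -> F s <= F t.
Proof.
move=> kq; have [A0 A0k] : exists A : {set 'I_q}, #|A| == k.
  have : (0 < #|[set A : {set 'I_q} | #|A| == k]%SET|)%N.
    by rewrite card_draws card_ord bin_gt0.
  by case/card_gt0P => A; rewrite inE; exists A.
have [A /eqP Ak A_min] :=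
  arg_minP (P := fun A : {set 'I_q} => #|A| == k) (fun A => F (indicator_row A)) A0k.
exists (indicator_row A); first exact: indicator_row_Sk.
move=> t /Tk_vertex_below [s /Sk_indicator_row [B Bk ->] Fs].
by apply: le_trans Fs; apply: A_min; apply/eqP.
Qed.

End vertex_minimum.



Theorem mainTheorem3 (R : realType) (n m q k : nat)
  (X : 'M[R]_(n, m + q)) (y : 'I_n -> R) (lam del : R) :
  (0 < n)%N ->
  (forall i, y i = 0 \/ y i = 1) ->
  0 <= lam ->
  0 < del ->
  (forall nu : R, eigenvalue ((rsubmx X)^T *m rsubmx X) nu ->
     nu / (8 * n%:R) <= del) ->
  (k <= q)%N ->
  concave_on (@open_cube R q) (f_obj X y del lam)
  /\ concave_on (@Tk R q k) (f_obj X y del lam)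
  /\ exists2 s, @Sk R q k s &
       forall t, @Tk R q k t -> f_obj X y del lam s <= f_obj X y del lam t.
Proof.
move=> n_gt0 y01 lam_ge0 del_gt0 eig_le kq.
have y01' i : 0 <= y i <= 1 by case: (y01 i) => ->; rewrite lexx ler01.
have X_le : forall w, usubmx w = 0 -> sqnorm (X *m w) <= 8 * n%:R * del * sqnorm w.
  apply: sqnorm_mulmx_rsub_le => nu /eig_le.
  by rewrite ler_pdivrMr ?mulr_gt0 ?ltr0n // mulrC.
have f_concave : concave_on (@closed_cube R q) (f_obj X y del lam).
  apply: (concave_on_inf (0, 0)) => [t|bb]; last exact: pen_nll_concave.
  by exists 0 => _ [bb _ <-]; apply: pen_nll_ge0 => //; exact: ltW.
have Tk_concave : concave_on (Tk k) (f_obj X y del lam).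
  by apply: concave_onS f_concave => t [].
split; last by split=> //; exact: Tk_vertex_min.
by apply: concave_onS f_concave => t t01 j; have /andP[? ?] := t01 j; rewrite !ltW.
Qed.
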